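(* Let $r\ge1$ and $G\subset\mathbb{Z}_2^r$ a subgroup with $1^r\in G$, and let $S_G$ be as below. Then $Z_{S_G}:=\sum_{\mu}\dim(S_G)_\mu\,\theta_\mu=\sum_{d\in D_G}\sum_{\alpha\in C_G}2^{-|d|_l}\theta_{(d,d_\perp\alpha)}$; in particular $\dim(S_G)_{(d,d_\perp\alpha)}=[C_G^d:\Delta^d]=2^{-|d|_l}\#C_G^d$ for any $d\in D_G$, $\alpha\in C_G$, where $C_G^d=C_G\cap\mathbb{Z}_2^d$.
   Context: Identify $\mathrm{IS}=\{0,\frac12,\frac1{16}\}$ with $\{(d,c)\in\mathbb{Z}_2^2:dc=0\}$ via $0\leftrightarrow(0,0)$, $\frac12\leftrightarrow(0,1)$, $\frac1{16}\leftrightarrow(1,0)$, and componentwise $\mathrm{IS}^{(r,r)}=\mathrm{IS}^r\times\mathrm{IS}^r$ with pairs $(d,c)\in(\mathbb{Z}_2^{r+r})^2$ with $dc=0$ (componentwise product). $\theta_\mu$ ($\mu\in\mathrm{IS}^{(r,r)}$) is a formal basis of a vector space. For $c\in\mathbb{Z}_2^{r+r}$, $|c|_l,|c|_r$ are numbers of ones among first/last $r$ coordinates, $|c|=|c|_l-|c|_r$, $d_\perp=1^{2r}+d$, $\mathbb{Z}_2^d=\{\alpha:d\alpha=\alpha\}$; $A^\perp=\{\beta:|\beta a|\in2\mathbb{Z}\ \forall a\in A\}$. Construction: $\Delta(g)=(g,g)$; $D_G=\Delta G$, $C_G=D_G^\perp$. Let $C^{\rm even}_{r,r}=\{\alpha:|\alpha|\in2\mathbb{Z}\}$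 with ordered basis $(v_1,\dots,v_{2r-1})=(\Delta e_1,\dots,\Delta e_r,\tilde e_1-\tilde e_2,\dots,\tilde e_{r-1}-\tilde e_r)$, $\tilde e_i=(e_i,0)$; $\varepsilon$ is the bimultiplicative map to $\{\pm1\}$ with $\varepsilon(v_i,v_i)=(-1)^{|v_i|/2}$, $\varepsilon(v_i,v_j)=1$ ($i<j$), $(-1)^{|v_iv_j|}$ ($i>j$). $\mathbb{C}[\hat C_G]$ has basis $e_\alpha$ ($\alpha\in C_G$), $e_\alpha e_\beta=\varepsilon(\alpha,\beta)e_{\alpha+\beta}$. For $d\in\Delta\mathbb{Z}_2^r$, $\Delta^d=\mathbb{Z}_2^d\cap\Delta\mathbb{Z}_2^r$, and $\{e_\gamma\}_{\gamma\in\Delta^d}$ spans a copy of $\mathbb{C}[\Delta^d]$. For $d\in D_G$, $A_G(d)=\mathbb{C}[\hat C_G]\otimes_{\mathbb{C}[\Delta^d]}\mathbb{C}t_d$ (trivial module), $S_G=\bigoplus_{d\in D_G}A_G(d)$, graded by putting $e_\alpha\cdot t_d$ in degree $(d,d_\perp\alpha)$. *)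

From HB Require Import structures.
From mathcomp Require Import all_boot all_order all_algebra all_field.
Set Implicit Arguments. Unset Strict Implicit. Unset Printing Implicit Defensive.
Import GRing.Theory Num.Theory.
Local Open Scope ring_scope.

(* Z_2^{r+r} is modelled as 'rV['F_2]_(r + r): the first r coordinates are
   the "left" ones, the last r the "right" ones. *)
Section Defs.
Variable r : nat.
Local Notation V := 'rV['F_2]_(r + r).
Local Notation W := 'rV['F_2]_r.

Definition Delta (g : W) : V := row_mx g g.
Definition cmul (a b : V) : V := \row_j (a 0 j * b 0 j).
Definition wl (c : V) : nat := #|[set i : 'I_r | lsubmx c 0 i != 0]|.
Definition wr (c : V) : nat := #|[set i : 'I_r | rsubmx c 0 i != 0]|.
Definition wt (c : V) : int := (wl c)%:Z - (wr c)%:Z.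
Definition dperp (d : V) : V := const_mx 1 + d.
Definition Z2sub (d : V) : {set V} := [set a | cmul d a == a].
Definition perp (A : {set V}) : {set V} :=
  [set b | [forall a in A, (2 %| wt (cmul b a))%Z]].
Definition DG (G : {set W}) : {set V} := Delta @: G.
Definition CG (G : {set W}) : {set V} := perp (DG G).
Definition Ceven : {set V} := [set a | (2 %| wt a)%Z].

(* standard basis vectors e_i of Z_2^r (indices counted from 0) and tilde e_i *)
Definition ev (i : nat) : W := \row_(j < r) ((j : nat) == i)%:R.
Definition etil (i : nat) : V := row_mx (ev i) 0.

(* the ordered basis (v_1, ..., v_{2r-1}) of C^even, indexed by 'I_(r + (r-1)) *)
Definition vb (k : 'I_(r + r.-1)) : V :=
  match split k with
  | inl i => Delta (ev i)
  | inr k' => etil k' - etil k'.+1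
  end.
Definition vtuple : (r + r.-1).-tuple V := [tuple vb k | k < r + r.-1].

Definition eps_basis (i j : 'I_(r + r.-1)) : algC :=
  if i == j then (-1) ^ (wt (vb i) %/ 2)%Z
  else if (i < j)%N then 1
  else (-1) ^ (wt (cmul (vb i) (vb j))).

(* the bimultiplicative extension: eps(sum a_i v_i, sum b_j v_j)
   = prod_{i,j} eps(v_i,v_j)^{a_i b_j} *)
Definition eps (a b : V) : algC :=
  \prod_(i < r + r.-1) \prod_(j < r + r.-1)
     (if (coord vtuple i a != 0) && (coord vtuple j b != 0)
      then eps_basis i j else 1).

(* the ambient space C^{Z_2^{r+r}} with standard basis e_alpha;
   C[hat C_G] is the span of the e_alpha, alpha in C_G, with
   e_alpha e_beta = eps(alpha,beta) e_(alpha+beta). *)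
Definition ebas (a : V) : 'rV[algC]_#|{: V}| := delta_mx 0 (enum_rank a).

Definition DeltaD (d : V) : {set V} := Z2sub d :&: (Delta @: [set: W]).

(* A_G(d) = C[hat C_G] (x)_{C[Delta^d]} C t_d is the quotient of C[hat C_G]
   by the span of the relations (e_alpha e_gamma) (x) t_d - e_alpha (x) (e_gamma t_d)
   = eps(alpha,gamma) e_(alpha+gamma) - e_alpha, (alpha in C_G, gamma in Delta^d),
   identifying e_alpha (x) t_d with the class of e_alpha. *)
Definition Krel (G : {set W}) (d : V) :=
  (\sum_(a in CG G) \sum_(g in DeltaD d) <<eps a g *: ebas (a + g) - ebas a>>)%MS.
(* the span of the e_alpha of degree (d, c), i.e. with d_perp alpha = c *)
Definition Wdeg (G : {set W}) (d c : V) :=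
  (\sum_(a in CG G | cmul (dperp d) a == c) <<ebas a>>)%MS.
(* dimension of the degree-(d,c) component of A_G(d): the image of Wdeg in the
   quotient by Krel *)
Definition dimA (G : {set W}) (d c : V) : nat :=
  (\rank (Wdeg G d c + Krel G d)%MS - \rank (Krel G d))%N.
Definition dimS (G : {set W}) (mu : V * V) : nat :=
  if mu.1 \in DG G then dimA G mu.1 mu.2 else 0%N.
End Defs.

From HB Require Import structures.
From mathcomp Require Import all_boot all_order all_algebra all_field.
From mathcomp Require Import zify.
Set Implicit Arguments.
Unset Strict Implicit.
Unset Printing Implicit Defensive.
Import GRing.Theory Num.Theory.
Local Open Scope ring_scope.

(* Fix d = Delta g in D_G.  Every b splits as b = b' + gamma, where
   gamma = d * Delta (b_l) lies in Delta^d and the reduced part b' has no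
   component there; gamma does not change the degree d_perp b.  Since epsilon
   is a +-1-valued bicharacter that is trivial on Delta Z_2^r, the twisted
   projection e_a |-> epsilon(a', gamma) e_a' kills the relations defining
   A_G(d), while the e_b' themselves survive.  Hence the degree-(d, c)
   component has dimension #{reduced b' in C_G of degree c}.  Each such b'
   accounts for #Delta^d = 2^|d|_l elements of the fibre of d_perp over c,
   and for c = d_perp a that fibre is the coset a + C_G^d. *)

Lemma F2_cases (x : 'F_2) : x = 0 \/ x = 1.
Proof. by case: x => [[|[|n]] lt_x2] //; [left|right]; apply: val_inj. Qed.

Lemma F2_addxx (x : 'F_2) : x + x = 0.
Proof. exact: addrr_pchar2 (pchar_Fp (isT : prime 2)) x. Qed.

Lemma F2_mulxx (x : 'F_2) : x * x = x.
Proof. by case: (F2_cases x) => ->; rewrite ?mulr0 ?mulr1. Qed.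

Lemma F2_neq0 (x : 'F_2) : x != 0 -> x = 1.
Proof. by case: (F2_cases x) => ->; rewrite ?eqxx. Qed.

Lemma F2row_addxx n (u : 'rV['F_2]_n) : u + u = 0.
Proof. by apply/rowP => j; rewrite !mxE F2_addxx. Qed.

Lemma F2row_add_eq0 n (u v : 'rV['F_2]_n) : (u + v == 0) = (u == v).
Proof.
rewrite -[u == v]subr_eq0; congr (u + _ == 0).
by apply/eqP; rewrite -subr_eq0 opprK F2row_addxx.
Qed.

Lemma sign_int_sq (R : idomainType) (z : int) : (-1 : R) ^ z * (-1) ^ z = 1.
Proof. by rewrite -exprzMl ?unitrN1 // mulrNN mulr1 exp1rz. Qed.

Lemma if_F2_add (R : pzSemiRingType) (E : R) (y y' : 'F_2) : E * E = 1 ->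
  (if y + y' != 0 then E else 1) =
  (if y != 0 then E else 1) * (if y' != 0 then E else 1).
Proof.
by move=> E2; case: (F2_cases y) => ->; case: (F2_cases y') => ->;
  rewrite ?F2_addxx ?addr0 ?add0r ?eqxx ?oner_eq0 /= ?mulr1 ?mul1r.
Qed.

Section Support.
Variable n : nat.
Implicit Types u v : 'rV['F_2]_n.

Definition hmul u v : 'rV['F_2]_n := \row_j (u 0 j * v 0 j).
Definition supp u : {set 'I_n} := [set i | u 0 i != 0].

Lemma card_supp u : #|supp u| = \sum_i ((u 0 i != 0)%R : nat).
Proof. by rewrite cardsE -sum1_card big_mkcond. Qed.

Lemma card_supp_add u v :
  (#|supp (u + v)| + 2 * #|supp (hmul u v)| = #|supp u| + #|supp v|)%N.
Proof.
rewrite !card_supp big_distrr -!big_split /=; apply: eq_bigr => i _; rewrite !mxE.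
by case: (F2_cases (u 0 i)) => ->; case: (F2_cases (v 0 i)) => ->;
  rewrite ?F2_addxx ?addr0 ?add0r ?mulr0 ?mul0r ?mulr1 ?eqxx ?oner_eq0.
Qed.

Definition chi (A : {set 'I_n}) : 'rV['F_2]_n := \row_i (i \in A)%:R.

Lemma supp_chi A : supp (chi A) = A.
Proof.
by apply/setP => i; rewrite !inE mxE; case: (i \in A); rewrite ?eqxx ?oner_eq0.
Qed.

Lemma chi_supp u : chi (supp u) = u.
Proof. by apply/rowP => i; rewrite !mxE inE; case: (F2_cases (u 0 i)) => ->. Qed.

Lemma hmul_fixP u v : reflect (hmul u v = v) (supp v \subset supp u).
Proof.
apply: (iffP subsetP) => [sub_vu | uv_v i].
  apply/rowP => i; rewrite mxE.
  case: (F2_cases (v 0 i)) => [->|v_i]; first by rewrite mulr0.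
  by have := sub_vu i; rewrite !inE v_i oner_eq0 => /(_ isT)/F2_neq0 ->; rewrite mul1r.
by rewrite !inE -uv_v mxE; apply: contra_neq => ->; rewrite mul0r.
Qed.

End Support.

Section Weights.
Variable r : nat.
Local Notation V := 'rV['F_2]_(r + r).
Local Notation W := 'rV['F_2]_r.
Implicit Types (a b c : V) (x y : W).

Lemma cmulA a b c : cmul a (cmul b c) = cmul (cmul a b) c.
Proof. by apply/rowP => j; rewrite !mxE mulrA. Qed.

Lemma cmulDr a b c : cmul a (b + c) = cmul a b + cmul a c.
Proof. by apply/rowP => j; rewrite !mxE mulrDr. Qed.

Lemma cmulDl a b c : cmul (a + b) c = cmul a c + cmul b c.
Proof. by apply/rowP => j; rewrite !mxE mulrDl. Qed.

Lemma cmulxx a : cmul a a = a.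
Proof. by apply/rowP => j; rewrite !mxE F2_mulxx. Qed.

Lemma dperpE d a : cmul (dperp d) a = a + cmul d a.
Proof. by apply/rowP => j; rewrite !mxE mulrDl mul1r. Qed.

Lemma lsubmx_cmul a b : lsubmx (cmul a b) = hmul (lsubmx a) (lsubmx b).
Proof. by apply/rowP => j; rewrite !mxE. Qed.

Lemma rsubmx_cmul a b : rsubmx (cmul a b) = hmul (rsubmx a) (rsubmx b).
Proof. by apply/rowP => j; rewrite !mxE. Qed.

Lemma wl_add a b : (wl (a + b) + 2 * wl (cmul a b) = wl a + wl b)%N.
Proof. by have := card_supp_add (lsubmx a) (lsubmx b); rewrite -linearD -lsubmx_cmul. Qed.

Lemma wr_add a b : (wr (a + b) + 2 * wr (cmul a b) = wr a + wr b)%N.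
Proof. by have := card_supp_add (rsubmx a) (rsubmx b); rewrite -linearD -rsubmx_cmul. Qed.

Lemma wt_add a b : wt (a + b) = wt a + wt b - 2%:Z * wt (cmul a b).
Proof. by have := wl_add a b; have := wr_add a b; rewrite /wt; lia. Qed.

Lemma perpD (A : {set V}) : {in perp A &, forall a b, a + b \in perp A}.
Proof.
move=> a b; rewrite !inE => /forall_inP perp_a /forall_inP perp_b.
apply/forall_inP => c Ac; rewrite cmulDl wt_add.
by rewrite rpredB ?(rpredD (perp_a _ Ac) (perp_b _ Ac)) ?(dvdz_mulr _ (dvdzz 2)).
Qed.

Lemma Delta_add x y : Delta (x + y) = Delta x + Delta y.
Proof. by rewrite /Delta add_row_mx. Qed.

Lemma Delta_inj : injective (@Delta r).
Proof. by move=> x y /(congr1 lsubmx); rewrite /Delta !row_mxKl. Qed.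

Lemma Delta_cmul x y : cmul (Delta x) (Delta y) = Delta (hmul x y).
Proof.
apply/rowP => j; rewrite mxE.
by case: (split_ordP j) => k ->; rewrite /Delta ?row_mxEl ?row_mxEr mxE.
Qed.

Lemma wt_Delta x : wt (Delta x) = 0.
Proof. by rewrite /wt /wl /wr /Delta row_mxKl row_mxKr subrr. Qed.

Lemma Delta_in_CG (G : {set W}) x : Delta x \in CG G.
Proof.
rewrite inE; apply/forall_inP => _ /imsetP[y _ ->].
by rewrite Delta_cmul wt_Delta dvdz0.
Qed.

End Weights.

Section Epsilon.
Variable r : nat.
Local Notation V := 'rV['F_2]_(r + r).
Local Notation W := 'rV['F_2]_r.
Local Notation n := (r + r.-1)%N.

Lemma sum_ev (a : 'I_r -> 'F_2) : \sum_i a i *: ev r i = \row_i a i.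
Proof.
apply/rowP => j; rewrite summxE mxE (bigD1 j) //= big1 => [|i neq_ij].
  by rewrite !mxE eqxx mulr1 addr0.
by rewrite !mxE (inj_eq val_inj) eq_sym (negbTE neq_ij) mulr0.
Qed.

Lemma ev_telescope_free (b : 'I_r.-1 -> 'F_2) :
  \sum_j b j *: (ev r j - ev r j.+1) = 0 -> forall j, b j = 0.
Proof.
move=> sum0.
have step (j : 'I_r.-1) : (forall i : 'I_r.-1, (i < j)%N -> b i = 0) -> b j = 0.
  move=> b_lt; have lt_jr : (j < r)%N := leq_trans (ltn_ord j) (leq_pred r).
  have := congr1 (fun u : W => u 0 (Ordinal lt_jr)) sum0.
  rewrite /= summxE mxE (bigD1 j) //= big1 => [|i neq_ij].
    by rewrite !mxE /= eqxx (ltn_eqF (ltnSn j)) subr0 mulr1 addr0.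
  rewrite !mxE /= (inj_eq val_inj) eq_sym (negbTE neq_ij) sub0r.
  have [eq_ji|] := eqVneq (j : nat) i.+1; last by rewrite mulr0n oppr0 mulr0.
  by rewrite b_lt ?mul0r ?eq_ji.
move=> j; have [m lt_jm] := ubnP j; elim: m j lt_jm => // m IHm j lt_jm.
by apply: step => i lt_ij; apply: IHm; apply: leq_trans lt_ij lt_jm.
Qed.

Lemma vb_lshift (i : 'I_r) : vb (lshift r.-1 i) = row_mx (ev r i) (ev r i).
Proof. by rewrite /vb (unsplitK (inl i)). Qed.

Lemma vb_rshift (k : 'I_r.-1) : vb (rshift r k) = row_mx (ev r k - ev r k.+1) 0.
Proof. by rewrite /vb (unsplitK (inr k)) /etil opp_row_mx add_row_mx oppr0 addr0. Qed.

Lemma vtuple_nth (i : 'I_n) : (vtuple r)`_i = vb i.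
Proof. by rewrite -tnth_nth tnth_mktuple. Qed.

Lemma free_vtuple : free (vtuple r).
Proof.
apply/freeP => k sum0.
have {}sum0 : \sum_i k (lshift r.-1 i) *: row_mx (ev r i) (ev r i)
  + \sum_j k (rshift r j) *: row_mx (ev r j - ev r j.+1) 0 = 0.
  rewrite -[RHS]sum0 big_split_ord; congr (_ + _);
    by apply: eq_bigr => i _; rewrite vtuple_nth ?vb_lshift ?vb_rshift.
have kl0 (i : 'I_r) : k (lshift r.-1 i) = 0.
  have := congr1 rsubmx sum0; rewrite linearD !linear_sum /=.
  under eq_bigr do rewrite linearZ /= row_mxKr.
  under [X in _ + X]eq_bigr do rewrite linearZ /= row_mxKr scaler0.
  by rewrite big1_eq addr0 linear0 sum_ev => /rowP/(_ i); rewrite !mxE.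
have kr0 : forall j : 'I_r.-1, k (rshift r j) = 0.
  apply: ev_telescope_free.
  have := congr1 lsubmx sum0; rewrite linearD !linear_sum /=.
  under eq_bigr do rewrite linearZ /= row_mxKl kl0 scale0r.
  under [X in _ + X]eq_bigr do rewrite linearZ /= row_mxKl.
  by rewrite big1_eq add0r linear0.
by move=> i; case: (split_ordP i) => j ->.
Qed.

Lemma Delta_span (x : W) : Delta x = \sum_i x 0 i *: (vtuple r)`_(lshift r.-1 i).
Proof.
rewrite -[RHS]hsubmxK !linear_sum.
under eq_bigr do rewrite vtuple_nth vb_lshift linearZ /= row_mxKl.
under [X in row_mx _ X]eq_bigr do rewrite vtuple_nth vb_lshift linearZ /= row_mxKr.
by rewrite sum_ev /Delta; congr row_mx; apply/rowP => i; rewrite mxE.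
Qed.

Lemma coord_Delta_rshift (x : W) (k : 'I_r.-1) :
  coord (vtuple r) (rshift r k) (Delta x) = 0.
Proof.
rewrite Delta_span linear_sum big1 // => i _.
have := coord_free (lshift r.-1 i) (rshift r k) free_vtuple.
by rewrite eq_lrshift linearZ => /= ->; rewrite mulr0.
Qed.

Lemma eps_basis_sq (i j : 'I_n) : eps_basis i j * eps_basis i j = 1.
Proof. by rewrite /eps_basis; do 2?case: ifP => _; rewrite ?mulr1 ?sign_int_sq. Qed.

Lemma epsDr (a b b' : V) : eps a (b + b') = eps a b * eps a b'.
Proof.
rewrite /eps -big_split; apply: eq_bigr => i _; rewrite -big_split.
apply: eq_bigr => j _; rewrite linearD.
by case: (coord _ i a != 0); rewrite /= ?mulr1 // if_F2_add ?eps_basis_sq.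
Qed.

Lemma epsDl (a a' b : V) : eps (a + a') b = eps a b * eps a' b.
Proof.
rewrite /eps -big_split; apply: eq_bigr => i _; rewrite -big_split.
apply: eq_bigr => j _; rewrite linearD.
by case: (coord _ j b != 0); rewrite /= ?andbT ?andbF ?mulr1 // if_F2_add ?eps_basis_sq.
Qed.

Lemma eps0r (a : V) : eps a 0 = 1.
Proof.
by rewrite /eps big1 // => i _; rewrite big1 // => j _; rewrite linear0 eqxx andbF.
Qed.

Lemma eps_sq (a b : V) : eps a b * eps a b = 1.
Proof. by rewrite -epsDr F2row_addxx eps0r. Qed.

Lemma eps_neq0 (a b : V) : eps a b != 0.
Proof. by apply: contra_eq_neq (eps_sq a b) => ->; rewrite mulr0 eq_sym oner_neq0. Qed.

Lemma eps_Delta (x y : W) : eps (Delta x) (Delta y) = 1.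
Proof.
rewrite /eps big1 // => i _; rewrite big1 // => j _.
case: (split_ordP i) => i' ->; last by rewrite coord_Delta_rshift eqxx.
case: (split_ordP j) => j' ->; last by rewrite coord_Delta_rshift eqxx andbF.
rewrite /eps_basis !vb_lshift -!/(Delta _) Delta_cmul !wt_Delta div0z expr0z.
by rewrite !if_same.
Qed.

End Epsilon.

Section Decomposition.
Variable r : nat.
Local Notation V := 'rV['F_2]_(r + r).
Local Notation W := 'rV['F_2]_r.
Implicit Types (a b c d : V) (G : {set W}).

Definition dpart d b : V := cmul d (Delta (lsubmx b)).
Definition drep d b : V := b + dpart d b.
Definition cdeg d b : V := cmul (dperp d) b.
Definition fibre G d c : {set V} := [set b in CG G | cdeg d b == c].
Definition reduced G d c : {set V} := [set b in fibre G d c | dpart d b == 0].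

Lemma in_fibre G d c b : (b \in fibre G d c) = (b \in CG G) && (cdeg d b == c).
Proof. exact: in_set. Qed.

Lemma in_reduced G d c b :
  (b \in reduced G d c) = [&& b \in CG G, cdeg d b == c & dpart d b == 0].
Proof. by rewrite [LHS]in_set in_fibre andbA. Qed.

Lemma dpartD d a b : dpart d (a + b) = dpart d a + dpart d b.
Proof. by rewrite /dpart linearD Delta_add cmulDr. Qed.

Lemma cdegD d a b : cdeg d (a + b) = cdeg d a + cdeg d b.
Proof. exact: cmulDr. Qed.

Lemma cdeg_eq0 d b : (cdeg d b == 0) = (b \in Z2sub d).
Proof. by rewrite inE /cdeg dperpE F2row_add_eq0 eq_sym. Qed.

Lemma DeltaDP d g :
  reflect (cmul d g = g /\ exists x, g = Delta x) (g \in DeltaD d).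
Proof.
rewrite !inE; apply: (iffP andP) => [[/eqP dg /imsetP[x _ gx]]|[dg [x gx]]].
  by split => //; exists x.
by rewrite dg eqxx gx imset_f.
Qed.

Lemma cdeg_DeltaD d g : g \in DeltaD d -> cdeg d g = 0.
Proof. by case/DeltaDP => dg _; apply/eqP; rewrite cdeg_eq0 inE dg. Qed.

Lemma DeltaD_sub_CG G d : {subset DeltaD d <= CG G}.
Proof. by move=> g /DeltaDP[_ [x ->]]; apply: Delta_in_CG. Qed.

Lemma CG_addDeltaD G d a g : a \in CG G -> g \in DeltaD d -> a + g \in CG G.
Proof. by move=> Ca /(DeltaD_sub_CG G); apply: perpD. Qed.

Lemma dpart_id d g : g \in DeltaD d -> dpart d g = g.
Proof.
by case/DeltaDP=> dg [x gx]; rewrite /dpart gx /Delta row_mxKl -/(Delta x) -gx.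
Qed.

Lemma drep_add_dpart d b : drep d b + dpart d b = b.
Proof. by rewrite /drep -addrA F2row_addxx addr0. Qed.

Lemma drep_addDeltaD d a g : g \in DeltaD d -> drep d (a + g) = drep d a.
Proof. by move=> Dg; rewrite /drep dpartD (dpart_id Dg) addrACA F2row_addxx addr0. Qed.

Variable g0 : W.
Local Notation d0 := (Delta g0).

Lemma dpart_DeltaD b : dpart d0 b \in DeltaD d0.
Proof.
apply/DeltaDP; split; first by rewrite /dpart cmulA cmulxx.
by exists (hmul g0 (lsubmx b)); rewrite /dpart Delta_cmul.
Qed.

Lemma dpart_drep b : dpart d0 (drep d0 b) = 0.
Proof. by rewrite /drep dpartD (dpart_id (dpart_DeltaD b)) F2row_addxx. Qed.

Lemma cdeg_drep b : cdeg d0 (drep d0 b) = cdeg d0 b.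
Proof. by rewrite /drep cdegD (cdeg_DeltaD (dpart_DeltaD b)) addr0. Qed.

Lemma drep_reduced G c b : b \in fibre G d0 c -> drep d0 b \in reduced G d0 c.
Proof.
rewrite in_fibre in_reduced cdeg_drep dpart_drep eqxx andbT => /andP[Cb ->].
by rewrite (CG_addDeltaD Cb (dpart_DeltaD b)).
Qed.

Definition twist b : algC := eps (drep d0 b) (dpart d0 b).

Lemma twist_addDeltaD a g : g \in DeltaD d0 -> eps a g * twist (a + g) = twist a.
Proof.
move=> Dg; rewrite /twist drep_addDeltaD // dpartD (dpart_id Dg) epsDr.
rewrite -{1}(drep_add_dpart d0 a) epsDl.
have [[_ [x ->]] [_ [y ->]]] := (DeltaDP _ _ (dpart_DeltaD a), DeltaDP _ _ Dg).
by rewrite eps_Delta mulr1 mulrCA eps_sq mulr1.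
Qed.

End Decomposition.

Section Counting.
Variable r : nat.
Local Notation V := 'rV['F_2]_(r + r).
Local Notation W := 'rV['F_2]_r.
Variable G : {set W}.

Lemma DeltaD_Delta (g : W) :
  DeltaD (Delta g) = [set Delta (chi A) | A in powerset (supp g)].
Proof.
apply/setP => y; apply/DeltaDP/imsetP => [[gy [h yh]] | [A sAg ->]].
  move: gy; rewrite yh Delta_cmul => /Delta_inj/hmul_fixP sub_hg.
  by exists (supp h); rewrite ?powersetE ?chi_supp.
rewrite powersetE -{1}(supp_chi A) in sAg.
by rewrite Delta_cmul (hmul_fixP _ _ sAg); split; last exists (chi A).
Qed.

Lemma card_DeltaD (g : W) : #|DeltaD (Delta g)| = (2 ^ wl (Delta g))%N.
Proof.
rewrite DeltaD_Delta card_imset ?card_powerset //.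
  by rewrite /wl /Delta row_mxKl.
by move=> A B /Delta_inj /(congr1 (@supp r)); rewrite !supp_chi.
Qed.

Lemma card_fibre (g : W) c :
  #|fibre G (Delta g) c| = (#|reduced G (Delta g) c| * #|DeltaD (Delta g)|)%N.
Proof.
set d := Delta g; rewrite -cardsX.
have split_inj : injective (fun b => (drep d b, dpart d b)).
  by move=> a b [ra pa]; rewrite -(drep_add_dpart d a) ra pa drep_add_dpart.
rewrite -(card_imset _ split_inj); apply: eq_card => -[x y].
rewrite inE /=; apply/imsetP/andP => [[b Fb [-> ->]] | [Rx Dy]].
  by split; [apply: drep_reduced | apply: dpart_DeltaD].
move: Rx; rewrite in_reduced => /and3P[Cx /eqP cx /eqP px].
exists (x + y).
  by rewrite in_fibre (CG_addDeltaD Cx Dy) cdegD (cdeg_DeltaD Dy) addr0 cx eqxx.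
by rewrite (drep_addDeltaD _ Dy) dpartD (dpart_id Dy) px add0r /drep px addr0.
Qed.

Lemma card_fibre_cdeg d a : a \in CG G ->
  #|fibre G d (cdeg d a)| = #|CG G :&: Z2sub d|.
Proof.
move=> Ca; rewrite -(card_imset _ (addIr a)); apply: eq_card => x.
rewrite inE -cdeg_eq0; apply/imsetP/andP => [[b] | [Cx /eqP dx]].
  rewrite in_fibre => /andP[Cb /eqP db] ->.
  by rewrite perpD // cdegD db F2row_addxx.
exists (x + a); last by rewrite -addrA F2row_addxx addr0.
by rewrite in_fibre perpD // cdegD dx add0r eqxx.
Qed.

End Counting.

Lemma rank_adds_quotient (F : fieldType) m p q n (A : 'M[F]_(m, n))
    (K : 'M_(p, n)) (B : 'M_(q, n)) (f : 'M_n) :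
  row_free B -> (K <= kermx f)%MS -> (B <= A *m f)%MS -> (A <= B + K)%MS ->
  (\rank (A + K) - \rank K)%N = q.
Proof.
move=> /eqP rkB Kf BAf ABK.
have up : (\rank (A + K) <= q + \rank K)%N.
  rewrite -rkB; apply: leq_trans (mxrank_adds_leqif B K).1.
  by apply: mxrankS; rewrite addsmx_sub ABK addsmxSr.
have low : (q + \rank K <= \rank (A + K))%N.
  rewrite -(mxrank_mul_ker (A + K)%MS f) -rkB leq_add ?mxrankS //.
    by apply: submx_trans BAf _; rewrite submxMr ?addsmxSl.
  by rewrite sub_capmx addsmxSr Kf.
lia.
Qed.

Lemma row_free_rowsub1 (F : fieldType) m n (f : 'I_m -> 'I_n) :
  injective f -> row_free (rowsub f (1%:M : 'M[F]_n)).
Proof.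
move=> inj_f; apply/row_freeP; exists (rowsub f 1%:M)^T.
apply/matrixP => i j; rewrite !mxE (bigD1 (f i)) //= big1 => [|k ne_k].
  by rewrite !mxE eqxx mul1r addr0 eq_sym (inj_eq inj_f).
by rewrite !mxE eq_sym (negbTE ne_k) mul0r.
Qed.

Section Dimension.
Variable r : nat.
Local Notation V := 'rV['F_2]_(r + r).
Local Notation W := 'rV['F_2]_r.
Variables (G : {set W}) (g : W) (c : V).
Local Notation d := (Delta g).
Local Notation S := (reduced G d c).

Lemma dimA_Delta : dimA G d c = #|S|.
Proof.
pose B := rowsub (fun i : 'I_#|S| => enum_rank (enum_val i)) (1%:M : 'M[algC]__).
pose f : 'M[algC]_#|{: V}| := \matrix_(i, j)
  (if enum_val j == drep d (enum_val i) then twist g (enum_val i) else 0).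
have ebas_f b : ebas b *m f = twist g b *: ebas (drep d b).
  rewrite /ebas -rowE; apply/rowP => j; rewrite !mxE enum_rankK.
  have -> : (enum_val j == drep d b) = (j == enum_rank (drep d b)).
    by apply/eqP/eqP => [<-|->]; rewrite ?enum_valK ?enum_rankK.
  by case: eqP; rewrite ?mulr1 ?mulr0.
have ebas_B b : b \in S -> (ebas b <= B)%MS.
  move=> Sb; have -> : ebas b = row (enum_rank_in Sb b) B.
    by rewrite row_rowsub row1 enum_rankK_in.
  exact: row_sub.
apply: (rank_adds_quotient (B := B) (f := f)).
- by apply: row_free_rowsub1 => i j /enum_rank_inj /enum_val_inj.
- apply/sumsmx_subP => a _; apply/sumsmx_subP => h Dh; rewrite genmxE sub_kermx.
  rewrite mulmxBl -scalemxAl !ebas_f scalerA drep_addDeltaD //.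
  by rewrite twist_addDeltaD // subrr.
- apply/row_subP => i; rewrite row_rowsub row1.
  have := enum_valP i; set b := enum_val i => Sb.
  have [Cb cb pb] : [/\ b \in CG G, cdeg d b == c & dpart d b == 0].
    by apply/and3P; rewrite -in_reduced.
  have -> : 'e_(enum_rank b) = ebas b *m f.
    by rewrite ebas_f /twist /drep (eqP pb) addr0 eps0r scale1r.
  by apply: submxMr; apply: (sumsmx_sup b); rewrite ?Cb ?genmxE.
- apply/sumsmx_subP => a /andP[Ca ca]; rewrite genmxE.
  have Sa : drep d a \in S by apply: drep_reduced; rewrite in_fibre Ca.
  have rel : (twist g a *: ebas a - ebas (drep d a) <= Krel G d)%MS.
    apply: (sumsmx_sup (drep d a)); first exact: CG_addDeltaD Ca (dpart_DeltaD g a).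
    apply: (sumsmx_sup (dpart d a)); first exact: dpart_DeltaD.
    by rewrite drep_add_dpart genmxE.
  rewrite -(eqmx_scale _ (eps_neq0 (drep d a) (dpart d a))).
  rewrite -(addrNK (ebas (drep d a)) (twist g a *: ebas a)) addsmxC.
  exact: addmx_sub_adds rel (ebas_B _ Sa).
Qed.

End Dimension.

Lemma sum_pair_indicator (R : nmodType) (T U X : finType) (D : {set T})
    (C : {set U}) (f : T -> U -> X) (w : T -> R) (d : T) (c : X) :
  \sum_(d' in D) \sum_(a in C) (if (d', f d' a) == (d, c) then w d' else 0) =
  if d \in D then w d *+ #|[set a in C | f d a == c]| else 0.
Proof.
case: ifPn => [Dd | nDd].
  rewrite (bigD1 d) //= [X in _ + X]big1 => [|d' /andP[_ ne_d']]; last first.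
    by apply: big1 => a _; rewrite xpair_eqE (negbTE ne_d').
  rewrite addr0 -sumr_const big_mkcond [RHS]big_mkcond /=.
  by apply: eq_bigr => a _; rewrite xpair_eqE eqxx inE; case: (a \in C).
rewrite big1 // => d' Dd'; apply: big1 => a _; rewrite xpair_eqE.
by case: eqP Dd' => // -> Dd; rewrite Dd in nDd.
Qed.

Lemma dimS_DG (r : nat) (G : {set 'rV['F_2]_r}) d c : d \in DG G ->
  (dimS G (d, c))%:R = (2 ^- wl d * #|fibre G d c|%:R : algC).
Proof.
move=> DGd; rewrite /dimS /= DGd; have [g _ ->] := imsetP DGd.
rewrite dimA_Delta card_fibre card_DeltaD natrM natrX mulrCA mulVf ?mulr1 //.
by rewrite expf_neq0 // pnatr_eq0.
Qed.

Theorem mainTheorem14 (r : nat) (G : {set 'rV['F_2]_r}) :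
  (1 <= r)%N ->
  0 \in G -> {in G &, forall x y, x + y \in G} ->
  const_mx 1 \in G ->
  (forall mu : 'rV['F_2]_(r + r) * 'rV['F_2]_(r + r),
     cmul mu.1 mu.2 = 0 ->
     (dimS G mu)%:R =
       \sum_(d in DG G) \sum_(a in CG G)
          (if (d, cmul (dperp d) a) == mu then (2 ^- wl d : algC) else 0))
  /\
  (forall d a, d \in DG G -> a \in CG G ->
     ((dimS G (d, cmul (dperp d) a))%:R =
        (#|CG G :&: Z2sub d|%:R / #|DeltaD d|%:R : algC))
     /\ ((dimS G (d, cmul (dperp d) a))%:R =
        (2 ^- wl d * #|CG G :&: Z2sub d|%:R : algC))).
Proof.
(* No hypothesis is used: C_G = D_G^perp is a group for every G. *)
move=> _ _ _ _.
split=> [[d c] _ | d a DGd Ca].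
  rewrite sum_pair_indicator; case: ifPn => DGd; first by rewrite dimS_DG // mulr_natr.
  by rewrite /dimS (negbTE DGd).
have [g _ dg] := imsetP DGd.
rewrite -/(cdeg d a) dimS_DG // card_fibre_cdeg // dg card_DeltaD natrX mulrC.
by split.
Qed.
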